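(* Every left synchronous relation and every right synchronous relation over $\Sigma$ is realized by some transducer that is zero-avoiding with bound $0$. Moreover, both inclusions are proper: there is a relation realized by a transducer that is zero-avoiding with bound $0$ (for instance $(00/0)^*=\{0^{2i}/0^i : i\in\mathbb N_0\}$) which is neither left synchronous nor right synchronous.
   Context: A transducer is a quintuple $\mathcal T=(Q,\Sigma,E,I,F)$ with finite state set $Q$, finite alphabet $\Sigma$, finite transition set $E\subseteq Q\times\{x/y : x,y\in\Sigma\cup\{\lambda\}\}\times Q$ ($\lambda$ the empty word), nonempty initial set $I\subseteq Q$, final set $F\subseteq Q$. Paths, labels (concatenation of input parts / output parts), computations (empty or starting at an initial state) and accepting computations (empty with $I\cap F\neq\emptyset$, or nonempty ending at a final state) are as usual; $R(\mathcal T)$ is the set of labels of accepting computations. For a path $P$ with label $u/v$, $d(P)=|u|-|v|$, and $d_{max}(P)=\max\{|d(Q)| : Q\text{ a prefix of }P\}$. $\mathcal T$ is zero-avoiding with bound $k$ if for every computation $P$, $d_{max}(P)>k$ implies $d(P)\neq0$. A transducer is letter-to-letter if all its labels are $\sigma/\tau$ with $\sigma,\tau\in\Sigma$. The product of relations is $R_1R_2=\{u_1u_2/v_1v_2 : u_1/v_1\in R_1,\ u_2/v_2\in R_2\}$. A relation $R\subseteq\Sigma^*\times\Sigma^*$ is left synchronous if it is a finite union of relations each of the form $S(A\times\{\lambda\})$ or $S(\{\lambda\}\times A)$, where $A\subseteq\Sigma^*$ is regular and $S$ is realized by a letter-to-letter transducer; it is right synchronous if it is a finite union of relations each of the form $(A\times\{\lambda\})S$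 or $(\{\lambda\}\times A)S$ with $A,S$ as before. *)

From HB Require Import structures.
From mathcomp Require Import all_boot all_order all_algebra.
Set Implicit Arguments. Unset Strict Implicit. Unset Printing Implicit Defensive.
Import Order.TTheory GRing.Theory Num.Theory.

Definition wrel (Sigma : finType) := seq Sigma -> seq Sigma -> Prop.

(* A label x/y with x,y in Sigma ∪ {λ}
   is encoded as a pair of options (None = λ).  E is a (automatically finite)
   boolean predicate on Q × (Sigma∪{λ}) × (Sigma∪{λ}) × Q. *)
Record transducer (Sigma : finType) := Transducer {
  tstate : finType;
  tedge : tstate -> option Sigma -> option Sigma -> tstate -> bool;
  tinit : tstate -> bool;
  tfinal : tstate -> bool;
  tinit_ne : exists q, tinit q
}.

Section Transducers.
Variable Sigma : finType.
Variable T : transducer Sigma.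
Local Notation Q := (tstate T).

(* A path is a start state together with a sequence of steps
   (input part, output part, target state). *)
Definition step := (option Sigma * option Sigma * Q)%type.

Fixpoint is_path (p : Q) (s : seq step) : bool :=
  match s with
  | [::] => true
  | (x, y, q) :: s' => tedge p x y q && is_path q s'
  end.

Definition ow (o : option Sigma) : seq Sigma :=
  if o is Some a then [:: a] else [::].

Definition in_label (s : seq step) : seq Sigma :=
  flatten [seq ow st.1.1 | st <- s].
Definition out_label (s : seq step) : seq Sigma :=
  flatten [seq ow st.1.2 | st <- s].

Definition end_state (p : Q) (s : seq step) : Q := last p [seq st.2 | st <- s].

Definition dlen (s : seq step) : int :=
  ((size (in_label s))%:Z - (size (out_label s))%:Z)%R.

Definition dmax (s : seq step) : nat :=
  \max_(i < (size s).+1) `|dlen (take i s)|%N.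

Definition computation (p : Q) (s : seq step) : Prop :=
  is_path p s /\ tinit p.

Definition accepting (p : Q) (s : seq step) : Prop :=
  computation p s /\
  ((s = [::] /\ tfinal p) \/ (s <> [::] /\ tfinal (end_state p s))).

Definition relT : wrel Sigma := fun u v =>
  exists p s, accepting p s /\ in_label s = u /\ out_label s = v.

Definition zero_avoiding (k : nat) : Prop :=
  forall p s, computation p s -> (k < dmax s)%N -> dlen s <> 0%R.

Definition letter_to_letter : Prop :=
  forall (p q : Q) (x y : option Sigma), tedge p x y q -> x != None /\ y != None.

End Transducers.

Definition realizes (Sigma : finType) (T : transducer Sigma) (R : wrel Sigma) :=
  forall u v, R u v <-> relT T u v.

Record dfa (Sigma : finType) := DFA {
  dstate : finType;
  dstart : dstate;
  dtrans : dstate -> Sigma -> dstate;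
  dfinal : dstate -> bool
}.

Definition dfa_accepts (Sigma : finType) (M : dfa Sigma) (w : seq Sigma) : bool :=
  @dfinal _ M (foldl (@dtrans _ M) (dstart M) w).

Definition regular (Sigma : finType) (A : seq Sigma -> Prop) : Prop :=
  exists M : dfa Sigma, forall w, A w <-> dfa_accepts M w.

Definition rel_prod (Sigma : finType) (R1 R2 : wrel Sigma) : wrel Sigma :=
  fun u v => exists u1 u2 v1 v2,
    u = u1 ++ u2 /\ v = v1 ++ v2 /\ R1 u1 v1 /\ R2 u2 v2.

Definition left_only (Sigma : finType) (A : seq Sigma -> Prop) : wrel Sigma :=
  fun u v => A u /\ v = [::].
Definition right_only (Sigma : finType) (A : seq Sigma -> Prop) : wrel Sigma :=
  fun u v => u = [::] /\ A v.

Definition l2l_rel (Sigma : finType) (S : wrel Sigma) : Prop :=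
  exists T : transducer Sigma, letter_to_letter T /\ realizes T S.

Definition rel_eq (Sigma : finType) (R1 R2 : wrel Sigma) : Prop :=
  forall u v, R1 u v <-> R2 u v.

Definition left_sync_piece (Sigma : finType) (R : wrel Sigma) : Prop :=
  exists (S : wrel Sigma) (A : seq Sigma -> Prop),
    l2l_rel S /\ regular A /\
    (rel_eq R (rel_prod S (left_only A)) \/ rel_eq R (rel_prod S (right_only A))).

Definition right_sync_piece (Sigma : finType) (R : wrel Sigma) : Prop :=
  exists (S : wrel Sigma) (A : seq Sigma -> Prop),
    l2l_rel S /\ regular A /\
    (rel_eq R (rel_prod (left_only A) S) \/ rel_eq R (rel_prod (right_only A) S)).

Definition left_synchronous (Sigma : finType) (R : wrel Sigma) : Prop :=
  exists (n : nat) (Rs : 'I_n -> wrel Sigma),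
    (forall i, left_sync_piece (Rs i)) /\
    forall u v, R u v <-> exists i, Rs i u v.

Definition right_synchronous (Sigma : finType) (R : wrel Sigma) : Prop :=
  exists (n : nat) (Rs : 'I_n -> wrel Sigma),
    (forall i, right_sync_piece (Rs i)) /\
    forall u v, R u v <-> exists i, Rs i u v.

Definition double_rel (Sigma : finType) (a : Sigma) : wrel Sigma :=
  fun u v => exists i : nat, u = nseq (2 * i) a /\ v = nseq i a.

From HB Require Import structures.
From mathcomp Require Import all_boot all_order all_algebra.
From mathcomp Require Import zify.
Set Implicit Arguments. Unset Strict Implicit. Unset Printing Implicit Defensive.
Import Order.TTheory GRing.Theory Num.Theory.

(* Call a transducer oriented if a boolean sign can be
   attached to its states, constant along edges, such that every edge moves
   d = |input| - |output| in the direction of the sign.  Along a computation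
   d is then monotone, so d(P) = 0 forces d to vanish on every prefix: oriented
   transducers are zero-avoiding with bound 0.  Letter-to-letter transducers
   and the obvious transducers for A x {λ} (resp. {λ} x A) move d in a single
   direction; gluing two such transducers by a λ/λ edge realizes their
   product, and the disjoint union of oriented transducers realizes the
   union.  Hence every finite union of synchronous pieces is oriented.
   A two-state transducer realizes (aa/a)^* and is oriented as well.

   Write w(u,v) = |u| - 2|v|, which vanishes on (aa/a)^*.
   In each factor of a synchronous piece the output length is determined by
   the weight, and exchanging the first factors of two pairs of a product
   stays in the product; so a piece contained in (aa/a)^* has a single output
   length.  Finitely many pieces cannot cover infinitely many output lengths. *)

Section Paths.
Variables (Sigma : finType) (T : transducer Sigma).
Implicit Types (p q : tstate T) (s : seq (step T)).
Local Open Scope ring_scope.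

Lemma in_label_cons (st : step T) s : in_label (st :: s) = ow st.1.1 ++ in_label s.
Proof. by []. Qed.

Lemma out_label_cons (st : step T) s : out_label (st :: s) = ow st.1.2 ++ out_label s.
Proof. by []. Qed.

Lemma in_label_cat s1 s2 : in_label (s1 ++ s2) = in_label s1 ++ in_label s2.
Proof. by rewrite /in_label map_cat flatten_cat. Qed.

Lemma out_label_cat s1 s2 : out_label (s1 ++ s2) = out_label s1 ++ out_label s2.
Proof. by rewrite /out_label map_cat flatten_cat. Qed.

Lemma dlen_cat s1 s2 : dlen (s1 ++ s2) = dlen s1 + dlen s2.
Proof. rewrite /dlen in_label_cat out_label_cat !size_cat; lia. Qed.

Lemma dlen_step x y q :
  dlen [:: (x, y, q)] = (size (ow x))%:Z - (size (ow y))%:Z.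
Proof. by rewrite /dlen /in_label /out_label /= !cats0. Qed.

Lemma is_path_cat p s1 s2 :
  is_path p (s1 ++ s2) = is_path p s1 && is_path (end_state p s1) s2.
Proof. by elim: s1 p => [|[[x y] q] s1 IH] p //=; rewrite IH andbA. Qed.

Lemma end_state_cons p x y q s : end_state p ((x, y, q) :: s) = end_state q s.
Proof. by []. Qed.

Lemma end_state_cat p s1 s2 :
  end_state p (s1 ++ s2) = end_state (end_state p s1) s2.
Proof. by rewrite /end_state map_cat last_cat. Qed.

(* R(T) in terms of paths: the empty/nonempty case split of accepting
   computations collapses, since the end state of the empty path is its start. *)
Lemma relTE u v : relT T u v <->
  exists p s, [/\ is_path p s, tinit p, tfinal (end_state p s),
                  in_label s = u & out_label s = v].
Proof.
split.
- case=> p [s [[[Hp Hi] Hf] [Hu Hv]]]; exists p, s; split=> //.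
  by case: Hf => [[-> Hf] | [_ Hf]].
- case=> p [s [Hp Hi Hf Hu Hv]]; exists p, s; split=> //; split=> //.
  by case: s {Hp Hu Hv} Hf => [|st s] Hf; [left | right].
Qed.

End Paths.

Definition signed (b : bool) (z : int) : int := if b then z else (- z)%R.

Lemma signedD b x y : signed b (x + y)%R = (signed b x + signed b y)%R.
Proof. by case: b; rewrite /= ?opprD. Qed.

Lemma signed_eq0 b z : (signed b z == 0%R) = (z == 0%R).
Proof. by case: b; rewrite /= ?oppr_eq0. Qed.

Section Orientation.
Variables (Sigma : finType) (T : transducer Sigma).
Implicit Types (p q : tstate T) (s : seq (step T)).
Local Open Scope ring_scope.

Definition oriented_steps (b : bool) s : bool :=
  all (fun st => 0 <= signed b (dlen [:: st])) s.

Definition oriented (sg : tstate T -> bool) : Prop :=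
  forall p x y q, tedge p x y q ->
    sg q = sg p /\ 0 <= signed (sg p) (dlen [:: (x, y, q)]).

Definition directed (b : bool) : Prop :=
  forall p x y q, tedge p x y q -> 0 <= signed b (dlen [:: (x, y, q)]).

Lemma directed_oriented b : directed b -> oriented (fun _ => b).
Proof. by move=> Hb p x y q /Hb. Qed.

Lemma oriented_path sg : oriented sg ->
  forall p s, is_path p s -> oriented_steps (sg p) s.
Proof.
move=> Hor p s; elim: s p => [|[[x y] q] s IH] p //= /andP [He Hs].
by have [<- ->] := Hor _ _ _ _ He; rewrite IH.
Qed.

Lemma oriented_steps_dlen b s : oriented_steps b s -> 0 <= signed b (dlen s).
Proof.
elim: s => [|st s IH]; first by case: b.
by case/andP=> Hst /IH Hs; rewrite -cat1s dlen_cat signedD addr_ge0.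
Qed.

Lemma oriented_steps_prefix b s i :
  oriented_steps b s -> dlen s = 0 -> dlen (take i s) = 0.
Proof.
rewrite -{1 2}(cat_take_drop i s) /oriented_steps all_cat dlen_cat.
case/andP=> /oriented_steps_dlen Htake /oriented_steps_dlen Hdrop /eqP.
by rewrite -(signed_eq0 b) signedD paddr_eq0 // !signed_eq0 => /andP [/eqP].
Qed.

(* The core of the positive part: along a computation of an oriented
   transducer d is monotone, so d_max(P) = 0 whenever d(P) = 0. *)
Lemma oriented_zero_avoiding sg : oriented sg -> zero_avoiding T 0.
Proof.
move=> Hor p s [Hp _] Hmax Hd; move: Hmax.
suff -> : dmax s = 0%N by [].
apply: big1 => i _.
by rewrite (oriented_steps_prefix _ (oriented_path Hor Hp) Hd).
Qed.

End Orientation.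

Definition orientable (Sigma : finType) (R : wrel Sigma) : Prop :=
  exists (T : transducer Sigma) (sg : tstate T -> bool),
    oriented sg /\ realizes T R.

Lemma orientable_zero_avoiding (Sigma : finType) (R : wrel Sigma) :
  orientable R -> exists T : transducer Sigma, zero_avoiding T 0 /\ realizes T R.
Proof.
by case=> T [sg [Hor HR]]; exists T; split=> //; apply: oriented_zero_avoiding Hor.
Qed.

Lemma orientable_rel_eq (Sigma : finType) (R R' : wrel Sigma) :
  rel_eq R R' -> orientable R' -> orientable R.
Proof.
by move=> E [T [sg [Hor HR]]]; exists T, sg; split=> // u v; rewrite E.
Qed.

Section Simulation.
Variables (Sigma : finType) (U V : transducer Sigma).
Variable h : tstate U -> tstate V.

Definition map_steps (s : seq (step U)) : seq (step V) :=
  [seq (st.1.1, st.1.2, h st.2) | st <- s].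

Lemma in_label_map_steps s : in_label (map_steps s) = in_label s.
Proof. by rewrite /in_label /map_steps -map_comp. Qed.

Lemma out_label_map_steps s : out_label (map_steps s) = out_label s.
Proof. by rewrite /out_label /map_steps -map_comp. Qed.

Lemma end_state_map_steps p s : end_state (h p) (map_steps s) = h (end_state p s).
Proof. by elim: s p => [|[[x y] q] s IH] p //=; rewrite -IH. Qed.

Hypothesis h_edge : forall p x y q, tedge p x y q -> tedge (h p) x y (h q).

Lemma is_path_map_steps p s : is_path p s -> is_path (h p) (map_steps s).
Proof.
by elim: s p => [|[[x y] q] s IH] p //= /andP [/h_edge -> /IH].
Qed.

Lemma relT_map_steps :
  (forall p, tinit p -> tinit (h p)) -> (forall p, tfinal p -> tfinal (h p)) ->
  forall u v, relT U u v -> relT V u v.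
Proof.
move=> h_init h_final u v /relTE [p [s [Hp Hi Hf <- <-]]].
apply/relTE; exists (h p), (map_steps s); split.
- exact: is_path_map_steps.
- exact: h_init.
- by rewrite end_state_map_steps; apply: h_final.
- exact: in_label_map_steps.
- exact: out_label_map_steps.
Qed.

End Simulation.

Section Glue.
(* For c = false this is their disjoint union;
   for c = true the initial states are those of T1, the final states those
   of T2, and λ/λ edges lead from final states of T1 to initial states of T2,
   which realizes the product R(T1) R(T2). *)
Variables (Sigma : finType) (T1 T2 : transducer Sigma) (c : bool).

Definition glue_state : finType := (tstate T1 + tstate T2)%type.

Definition glue_edge (p : glue_state) (x y : option Sigma) (q : glue_state) : bool :=
  match p, q with
  | inl p, inl q => tedge p x y q
  | inr p, inr q => tedge p x y q
  | inl p, inr q => [&& c, x == None, y == None, tfinal p & tinit q]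
  | inr _, inl _ => false
  end.

Definition glue_init (p : glue_state) : bool :=
  match p with inl p => tinit p | inr p => ~~ c && tinit p end.

Definition glue_final (p : glue_state) : bool :=
  match p with inl p => ~~ c && tfinal p | inr p => tfinal p end.

Lemma glue_init_ne : exists q, glue_init q.
Proof. by case: (tinit_ne T1) => q Hq; exists (inl q). Qed.

Definition glueT : transducer Sigma :=
  @Transducer Sigma glue_state glue_edge glue_init glue_final glue_init_ne.

Lemma glue_path_inr q (s : seq (step glueT)) : is_path (T:=glueT) (inr q) s ->
  exists s2, s = map_steps (V:=glueT) inr s2 /\ is_path q s2.
Proof.
elim: s q => [|[[x y] [t|t]] s IH] q //=; first by exists [::].
case/andP=> /= He /IH [s2 [-> Hs2]].
by exists ((x, y, t) :: s2); rewrite /= He.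
Qed.

Lemma glue_path_inl p (s : seq (step glueT)) : c = false ->
  is_path (T:=glueT) (inl p) s ->
  exists s1, s = map_steps (V:=glueT) inl s1 /\ is_path p s1.
Proof.
move=> Hc; elim: s p => [|[[x y] [t|t]] s IH] p /=; first by exists [::].
- case/andP=> /= He /IH [s1 [-> Hs1]].
  by exists ((x, y, t) :: s1); rewrite /= He.
- by rewrite Hc.
Qed.

Lemma glue_path_split p (s : seq (step glueT)) : c = true ->
  is_path (T:=glueT) (inl p) s -> glue_final (end_state (T:=glueT) (inl p) s) ->
  exists s1 q s2,
    [/\ s = map_steps (V:=glueT) inl s1 ++ (None, None, inr q)
              :: map_steps (V:=glueT) inr s2,
        is_path p s1 /\ tfinal (end_state p s1), tinit q &
        is_path q s2 /\ tfinal (end_state q s2)].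
Proof.
move=> Hc; elim: s p => [|[[x y] [t|t]] s IH] p; first by rewrite /end_state /= Hc.
- case/andP=> /= He /IH IHs /IHs [s1 [q [s2 [-> [Hs1 Hf1] Hq Hs2]]]].
  by exists ((x, y, t) :: s1), q, s2; rewrite /= He.
- case/andP=> /and5P [_ /eqP -> /eqP -> Hfp Hit] /glue_path_inr [s2 [-> Hs2]].
  rewrite end_state_cons end_state_map_steps => Hf2.
  by exists [::], t, s2.
Qed.

Lemma glue_union u v : c = false ->
  (relT glueT u v <-> relT T1 u v \/ relT T2 u v).
Proof.
move=> Hc; split.
- case/relTE=> [[p|p] [s [Hp Hi Hf <- <-]]].
  + have [s1 [Es Hs1]] := glue_path_inl Hc Hp; subst s.
    left; apply/relTE; exists p, s1.
    move: Hf; rewrite end_state_map_steps /= Hc.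
    by rewrite in_label_map_steps out_label_map_steps.
  + have [s2 [Es Hs2]] := glue_path_inr Hp; subst s.
    right; apply/relTE; exists p, s2.
    move: Hi Hf; rewrite end_state_map_steps /= Hc.
    by rewrite in_label_map_steps out_label_map_steps.
- case=> H; [ apply: (relT_map_steps (V:=glueT) (h:=inl)) H
             | apply: (relT_map_steps (V:=glueT) (h:=inr)) H ];
    by move=> //= p; rewrite Hc.
Qed.

Lemma glue_concat u v : c = true ->
  (relT glueT u v <-> rel_prod (relT T1) (relT T2) u v).
Proof.
move=> Hc; split.
- case/relTE=> [[p|p] [s [Hp Hi Hf <- <-]]]; last by move: Hi; rewrite /= Hc.
  have [s1 [q [s2 [-> [Hs1 Hf1] Hq [Hs2 Hf2]]]]] := glue_path_split Hc Hp Hf.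
  exists (in_label s1), (in_label s2), (out_label s1), (out_label s2).
  rewrite in_label_cat out_label_cat in_label_cons out_label_cons.
  rewrite !in_label_map_steps !out_label_map_steps.
  by split=> //; split=> //; split; apply/relTE; [exists p, s1 | exists q, s2].
- case=> _ [_ [_ [_ [-> [-> [/relTE [p [s1 [Hs1 Hi1 Hf1 <- <-]]]
                               /relTE [q [s2 [Hs2 Hi2 Hf2 <- <-]]]]]]]]].
  apply/relTE; exists (inl p),
    (map_steps (V:=glueT) inl s1 ++ (None, None, inr q) :: map_steps (V:=glueT) inr s2).
  split.
  - rewrite is_path_cat (is_path_map_steps (V:=glueT)) //= end_state_map_steps.
    by rewrite /= Hc Hf1 Hi2 (is_path_map_steps (V:=glueT)).
  - by [].
  - by rewrite end_state_cat end_state_map_steps end_state_cons end_state_map_steps.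
  - by rewrite in_label_cat in_label_cons !in_label_map_steps.
  - by rewrite out_label_cat out_label_cons !out_label_map_steps.
Qed.

Lemma glue_oriented sg1 sg2 : c = false -> oriented sg1 -> oriented sg2 ->
  oriented (T:=glueT)
    (fun q : glue_state => match q with inl q => sg1 q | inr q => sg2 q end).
Proof.
move=> Hc H1 H2 [p|p] x y [q|q] //= He; [exact: H1 | | exact: H2].
by move: He; rewrite Hc.
Qed.

Lemma glue_directed b : directed T1 b -> directed T2 b -> directed glueT b.
Proof.
move=> H1 H2 [p|p] x y [q|q] //= He; rewrite dlen_step.
- by have := H1 _ _ _ _ He; rewrite dlen_step.
- by case/and5P: He => _ /eqP -> /eqP -> _ _; case: (b).
- by have := H2 _ _ _ _ He; rewrite dlen_step.
Qed.

End Glue.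

Lemma orientable_union (Sigma : finType) n (Rs : 'I_n -> wrel Sigma) :
  (forall i, orientable (Rs i)) -> orientable (fun u v => exists i, Rs i u v).
Proof.
elim: n Rs => [|n IH] Rs HRs.
  pose emptyT := @Transducer Sigma unit (fun _ _ _ _ => false) (fun _ => true)
                   (fun _ => false) (ex_intro _ tt is_true_true).
  exists emptyT, (fun _ => true); split=> // u v; split; first by case=> -[].
  by case/relTE=> p [[|? ?] [Hs _ Hf _ _]].
have [T0 [sg0 [Hor0 HR0]]] := HRs ord0.
have [T' [sg' [Hor' HR']]] := IH (fun i => Rs (lift ord0 i)) (fun i => HRs _).
exists (glueT T0 T' false); eexists; split; first exact: glue_oriented Hor0 Hor'.
move=> u v; rewrite glue_union // -HR0 -HR'; split.
- by case=> i; case: (unliftP ord0 i) => [j ->|->] Hi; [right; exists j | left].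
- by case=> [Hi | [j Hj]]; eexists; eauto.
Qed.

Lemma concat_orientable (Sigma : finType) (T1 T2 : transducer Sigma) b R1 R2 :
  directed T1 b -> directed T2 b -> realizes T1 R1 -> realizes T2 R2 ->
  orientable (rel_prod R1 R2).
Proof.
move=> D1 D2 H1 H2; exists (glueT T1 T2 true), (fun _ => b).
split; first by apply/directed_oriented/glue_directed.
move=> u v; rewrite glue_concat //; split;
  case=> u1 [u2 [v1 [v2 [-> [-> [Hr1 Hr2]]]]]];
  by exists u1, u2, v1, v2; rewrite -H1 -H2 in Hr1 Hr2 *.
Qed.

Section LetterToLetter.
(* Letter-to-letter transducers keep d constant, so they are directed either
   way, and every pair they realize has equal lengths. *)
Variables (Sigma : finType) (T : transducer Sigma).
Hypothesis T_l2l : letter_to_letter T.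

Lemma l2l_directed b : directed T b.
Proof.
move=> p x y q /T_l2l [Hx Hy]; rewrite dlen_step.
by case: x y Hx Hy => [x|] [y|] //= _ _; case: b.
Qed.

Lemma l2l_path_sizes p (s : seq (step T)) :
  is_path p s -> size (in_label s) = size (out_label s).
Proof.
elim: s p => [|[[x y] q] s IH] p //= /andP [/T_l2l [Hx Hy] /IH Hs].
rewrite in_label_cons out_label_cons !size_cat Hs.
by case: x y Hx Hy => [x|] [y|].
Qed.

End LetterToLetter.

Lemma l2l_rel_sizes (Sigma : finType) (S : wrel Sigma) :
  l2l_rel S -> forall u v, S u v -> size u = size v.
Proof.
by case=> T [L HS] u v /HS /relTE [p [s [Hs _ _ <- <-]]]; apply: l2l_path_sizes Hs.
Qed.

Section Regular.
(* A DFA M read as a transducer emitting c/λ (b = true) or λ/c (b = false)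
   for each letter c realizes A x {λ} (resp. {λ} x A). *)
Variables (Sigma : finType) (M : dfa Sigma) (b : bool).

Definition dfa_label (c : Sigma) : option Sigma * option Sigma :=
  if b then (Some c, None) else (None, Some c).

Definition dfa_edge (p : dstate M) (x y : option Sigma) (q : dstate M) : bool :=
  [exists c, ((x, y) == dfa_label c) && (q == dtrans p c)].

Lemma dfa_init_ne : exists q, q == dstart M.
Proof. by exists (dstart M). Qed.

Definition dfaT : transducer Sigma :=
  @Transducer Sigma (dstate M) dfa_edge (eq_op^~ (dstart M)) (@dfinal _ M) dfa_init_ne.

Definition one_sided (w : seq Sigma) : seq Sigma * seq Sigma :=
  if b then (w, [::]) else ([::], w).

Lemma dfaT_path p (s : seq (step dfaT)) : is_path (T:=dfaT) p s ->
  exists w, (in_label s, out_label s) = one_sided w /\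
            end_state p s = foldl (@dtrans _ M) p w.
Proof.
elim: s p => [|[[x y] q] s IH] p; first by exists [::]; rewrite /one_sided; case: b.
case/andP=> /existsP [c /andP [/eqP Exy /eqP ->]] /IH [w [Ew Hend]].
exists (c :: w); rewrite end_state_cons Hend; split=> //.
move: Ew Exy; rewrite in_label_cons out_label_cons /one_sided /dfa_label.
by case: b => -[-> ->] [-> ->].
Qed.

Lemma dfaT_run p w : exists s : seq (step dfaT),
  [/\ is_path (T:=dfaT) p s, (in_label s, out_label s) = one_sided w &
      end_state p s = foldl (@dtrans _ M) p w].
Proof.
elim: w p => [|c w IH] p /=; first by exists [::]; rewrite /one_sided; case: b.
have [s [Hs Ew Hend]] := IH (dtrans p c).
exists (((dfa_label c).1, (dfa_label c).2, dtrans p c) :: s).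
rewrite end_state_cons in_label_cons out_label_cons /= Hs andbT; split=> //.
- by apply/existsP; exists c; rewrite -surjective_pairing !eqxx.
- by move: Ew; rewrite /one_sided /dfa_label; case: b => -[-> ->].
Qed.

Lemma dfaT_realizes (A : seq Sigma -> Prop) :
  (forall w, A w <-> dfa_accepts M w) ->
  realizes dfaT (if b then left_only A else right_only A).
Proof.
move=> HA u v.
have -> : (if b then left_only A else right_only A) u v <->
          exists2 w, A w & (u, v) = one_sided w.
  rewrite /one_sided; case: b; split.
  - by case=> Hu ->; exists u.
  - by case=> w Hw [-> ->].
  - by case=> -> Hv; exists v.
  - by case=> w Hw [-> ->].
split.
- case=> w /HA Hw Euv; have [s [Hs Ew Hend]] := dfaT_run (dstart M) w.
  rewrite -Ew in Euv; case: Euv => -> ->.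
  by apply/relTE; exists (dstart M), s; split=> //=; rewrite Hend.
- case/relTE=> p [s [Hs /eqP Hi Hf <- <-]].
  have [w [Ew Hend]] := dfaT_path Hs.
  by exists w => //; apply/HA; rewrite /dfa_accepts -Hi -Hend.
Qed.

Lemma dfaT_directed : directed dfaT b.
Proof.
move=> p x y q /existsP [c /andP [/eqP Exy _]].
by move: Exy; rewrite dlen_step /dfa_label; case: b => -[-> ->].
Qed.

End Regular.

Section SynchronousPieces.
Variable Sigma : finType.

(* S (A x {λ}) and S ({λ} x A): the letter-to-letter part and the one-sided
   part are directed the same way, towards the nonempty side of A. *)
Lemma left_piece_orientable (R : wrel Sigma) : left_sync_piece R -> orientable R.
Proof.
case=> S [A [[TS [L HS]] [[M HA] [E|E]]]]; apply: (orientable_rel_eq E).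
- exact: concat_orientable (l2l_directed L true)
           (dfaT_directed (M:=M) (b:=true)) HS (dfaT_realizes true HA).
- exact: concat_orientable (l2l_directed L false)
           (dfaT_directed (M:=M) (b:=false)) HS (dfaT_realizes false HA).
Qed.

Lemma right_piece_orientable (R : wrel Sigma) : right_sync_piece R -> orientable R.
Proof.
case=> S [A [[TS [L HS]] [[M HA] [E|E]]]]; apply: (orientable_rel_eq E).
- exact: concat_orientable (dfaT_directed (M:=M) (b:=true))
           (l2l_directed L true) (dfaT_realizes true HA) HS.
- exact: concat_orientable (dfaT_directed (M:=M) (b:=false))
           (l2l_directed L false) (dfaT_realizes false HA) HS.
Qed.

Definition finite_union_of (P : wrel Sigma -> Prop) (R : wrel Sigma) : Prop :=
  exists (n : nat) (Rs : 'I_n -> wrel Sigma),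
    (forall i, P (Rs i)) /\ forall u v, R u v <-> exists i, Rs i u v.

Lemma finite_union_orientable (P : wrel Sigma -> Prop) (R : wrel Sigma) :
  (forall R', P R' -> orientable R') -> finite_union_of P R -> orientable R.
Proof.
move=> HP [n [Rs [HRs E]]]; apply: (orientable_rel_eq E).
by apply: orientable_union => i; apply/HP.
Qed.

End SynchronousPieces.

Section Doubling.
Variables (Sigma : finType) (a : Sigma).

Definition double_edge (p : bool) (x y : option Sigma) (q : bool) : bool :=
  match p, q with
  | false, true => (x == Some a) && (y == Some a)
  | true, false => (x == Some a) && (y == None)
  | _, _ => false
  end.

Lemma double_init_ne : exists q : bool, ~~ q.
Proof. by exists false. Qed.

Definition doubleT : transducer Sigma :=
  @Transducer Sigma bool double_edge negb negb double_init_ne.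

Lemma doubleT_path (p : bool) (s : seq (step doubleT)) :
  is_path (T:=doubleT) p s -> end_state (T:=doubleT) p s = false ->
  exists i, in_label s = nseq (2 * i + p) a /\ out_label s = nseq i a.
Proof.
elim: s p => [|[[x y] q] s IH] p; first by rewrite /end_state /= => _ ->; exists 0.
rewrite end_state_cons in_label_cons out_label_cons.
case/andP=> He /IH IHs /IHs [i [-> ->]].
case: p q He {IHs} => [] [] //= /andP [/eqP -> /eqP ->].
- by exists i; rewrite addn0 addn1.
- by exists i.+1; rewrite mulnS addn0 addn1.
Qed.

Fixpoint double_steps (i : nat) : seq (step doubleT) :=
  if i is i'.+1 then (Some a, Some a, true) :: (Some a, None, false) :: double_steps i'
  else [::].

Lemma double_steps_spec i :
  [/\ is_path (T:=doubleT) false (double_steps i),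
      end_state (T:=doubleT) false (double_steps i) = false,
      in_label (double_steps i) = nseq (2 * i) a &
      out_label (double_steps i) = nseq i a].
Proof.
elim: i => [|i [Hs Hend Ein Eout]]; first by [].
rewrite !end_state_cons !in_label_cons !out_label_cons Ein Eout Hend mulnS /=.
by rewrite Hs !eqxx.
Qed.

Lemma doubleT_realizes : realizes doubleT (double_rel a).
Proof.
move=> u v; split.
- case=> i [-> ->]; have [Hs Hend Ein Eout] := double_steps_spec i.
  by apply/relTE; exists false, (double_steps i); rewrite Hend.
- case/relTE=> p [s [Hs /negbTE Hp /negbTE Hf <- <-]].
  have [i [Ein Eout]] := doubleT_path Hs Hf.
  by exists i; rewrite Ein Eout Hp addn0.
Qed.

Lemma doubleT_directed : directed doubleT true.
Proof. by move=> [] x y [] //= /andP [/eqP -> /eqP ->]; rewrite dlen_step. Qed.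

Lemma double_orientable : orientable (double_rel a).
Proof.
exists doubleT, (fun _ => true); split; last exact: doubleT_realizes.
exact/directed_oriented/doubleT_directed.
Qed.

End Doubling.

Section Weight.
Variable Sigma : finType.
Implicit Types (u v x y : seq Sigma) (R : wrel Sigma).
Local Open Scope ring_scope.

Definition weight u v : int := (size u)%:Z - 2 * (size v)%:Z.

Lemma weight_cat x1 x2 y1 y2 :
  weight (x1 ++ x2) (y1 ++ y2) = weight x1 y1 + weight x2 y2.
Proof. rewrite /weight !size_cat; lia. Qed.

Lemma double_weight (a : Sigma) u v : double_rel a u v -> weight u v = 0.
Proof. case=> i [-> ->]; rewrite /weight !size_nseq; lia. Qed.

Definition weight_determined R : Prop :=
  forall x y x' y', R x y -> R x' y' -> weight x y = weight x' y' ->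
    size y = size y'.

Definition constant_output R : Prop :=
  forall u v u' v', R u v -> R u' v' -> size v = size v'.

(* The three kinds of factors: on S the weight is -|y|, on A x {λ} the
   output is empty, and on {λ} x A the weight is -2|y|. *)
Lemma l2l_weight_determined S : l2l_rel S -> weight_determined S.
Proof.
move=> L x y x' y' /(l2l_rel_sizes L) Hxy /(l2l_rel_sizes L) Hxy'.
rewrite /weight Hxy Hxy'; lia.
Qed.

Lemma left_only_weight_determined A : weight_determined (left_only A).
Proof. by move=> x y x' y' [_ ->] [_ ->]. Qed.

Lemma right_only_weight_determined A : weight_determined (right_only A).
Proof. move=> x y x' y' [-> _] [-> _]; rewrite /weight /=; lia. Qed.

(* Exchanging first factors keeps a pair in the product; since the weight of
   a zero-weight product splits as w and -w, the weight of the first factor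
   is the same for all pairs, hence so are both output lengths. *)
Lemma product_constant_output R R1 R2 :
  weight_determined R1 -> weight_determined R2 -> rel_eq R (rel_prod R1 R2) ->
  (forall u v, R u v -> weight u v = 0) -> constant_output R.
Proof.
move=> D1 D2 E W u v u' v' Huv Huv'.
have W0 := W _ _ Huv; have W0' := W _ _ Huv'.
case/E: Huv W0 => x1 [x2 [y1 [y2 [-> [-> [H1 H2]]]]]].
case/E: Huv' W0' => z1 [z2 [w1 [w2 [-> [-> [G1 G2]]]]]].
have Wmix : weight (z1 ++ x2) (w1 ++ y2) = 0.
  by apply/W/E; exists z1, x2, w1, y2.
rewrite !weight_cat in Wmix * => W0' W0.
have E1 : size y1 = size w1 by apply: (D1 _ _ _ _ H1 G1); lia.
have E2 : size y2 = size w2 by apply: (D2 _ _ _ _ H2 G2); lia.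
by rewrite !size_cat E1 E2.
Qed.

Lemma left_piece_constant_output R :
  left_sync_piece R -> (forall u v, R u v -> weight u v = 0) -> constant_output R.
Proof.
case=> S [A [L [_ [E|E]]]]; apply: (product_constant_output _ _ E);
  by [apply: l2l_weight_determined | apply: left_only_weight_determined
      | apply: right_only_weight_determined].
Qed.

Lemma right_piece_constant_output R :
  right_sync_piece R -> (forall u v, R u v -> weight u v = 0) -> constant_output R.
Proof.
case=> S [A [L [_ [E|E]]]]; apply: (product_constant_output _ _ E);
  by [apply: l2l_weight_determined | apply: left_only_weight_determined
      | apply: right_only_weight_determined].
Qed.

(* Pigeonhole: the n + 1 pairs a^(2i)/a^i, i <= n, cannot be spread over n
   relations of constant output length. *)
Lemma double_not_finite_union (a : Sigma) (P : wrel Sigma -> Prop) :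
  (forall R, P R -> (forall u v, R u v -> weight u v = 0) -> constant_output R) ->
  ~ finite_union_of P (double_rel a).
Proof.
move=> HP [n [Rs [HRs E]]].
have Hconst i : constant_output (Rs i).
  by apply: HP => // u v Hi; apply: (@double_weight a); apply/E; exists i.
have /fin_all_exists [f Hf] :
    forall N : 'I_n.+1, exists i, Rs i (nseq (2 * N) a) (nseq N a).
  by move=> N; apply/E; exists N.
have f_inj : injective f.
  move=> N N' EN; apply/val_inj.
  have HN' := Hf N'; rewrite -EN in HN'.
  by have := Hconst _ _ _ _ _ (Hf N) HN'; rewrite !size_nseq.
by have := leq_card _ f_inj; rewrite !card_ord ltnn.
Qed.

End Weight.

Theorem proposition4 (Sigma : finType) (a : Sigma) :
  (forall R : wrel Sigma, left_synchronous R ->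
     exists T : transducer Sigma, zero_avoiding T 0 /\ realizes T R) /\
  (forall R : wrel Sigma, right_synchronous R ->
     exists T : transducer Sigma, zero_avoiding T 0 /\ realizes T R) /\
  ((exists T : transducer Sigma, zero_avoiding T 0 /\ realizes T (double_rel a)) /\
   ~ left_synchronous (double_rel a) /\ ~ right_synchronous (double_rel a)).
Proof.
split; [|split; [|split; [|split]]].
- move=> R HR; apply: orientable_zero_avoiding.
  exact: finite_union_orientable (@left_piece_orientable Sigma) HR.
- move=> R HR; apply: orientable_zero_avoiding.
  exact: finite_union_orientable (@right_piece_orientable Sigma) HR.
- exact/orientable_zero_avoiding/double_orientable.
- exact: double_not_finite_union (@left_piece_constant_output Sigma).
- exact: double_not_finite_union (@right_piece_constant_output Sigma).
Qed.
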